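(* Let $f \colon \mathbb{R}^n \to \mathbb{R}$ and $g \colon \mathbb{R}^n \to \mathbb{R}^m$ be continuously differentiable, let $X \subseteq \mathbb{R}^m$ be nonempty and closed, let $\rho>0$, and let $p^\rho(y)=\sum_{i=1}^n p_i^\rho(y_i)$ where each $p_i^\rho$ satisfies (P.1)–(P.3) below. Let $\varepsilon>0$ be such that there exists $t^*>0$ with $(p_i^\rho)'(t^* )>\varepsilon$ for every $i=1,\dots,n$. Let $\{\alpha_k\}\subset(0,\infty)$ and let $\{(x^k,y^k)\}\subset\mathbb{R}^n\times\mathbb{R}^n$, $\{z^k\}\subset\mathbb{R}^m$ be sequences with $$g(x^k)+z^k\in X,\qquad z^k\in B_\varepsilon(0),\qquad y^k\ge 0,$$ and assume there are $\lambda^k\in N^{\lim}_X(g(x^k)+z^k)$ and $\gamma^k\in N_{\ge0}(y^k)$ such that $$\begin{pmatrix} -\nabla f(x^k) - \alpha_k\, y^k\circ\partial(|x^k|) - g'(x^k)^T\lambda^k\\ -\nabla p^\rho(y^k) - \alpha_k|x^k| + \sum_{i\in I_0(y^k)}\gamma_i^k e_i\end{pmatrix} \in B_\varepsilon(0)\times B_\varepsilon(0)$$ (i.e. for some element of $y^k\circ\partial(|x^k|)$ the first block lies in $B_\varepsilon(0)$ and the second block lies in $B_\varepsilon(0)$). If $\alpha_k\to\infty$, then $|x^k|\circ y^k\to 0$.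
   Context: Conditions on each $p_i^\rho\colon\mathbb{R}\to\mathbb{R}$: (P.1) convex with a unique minimizer $s_i^\rho>0$; (P.2) $p_i^\rho(0)-p_i^\rho(s_i^\rho)=\rho$; (P.3) continuously differentiable. Notation: $B_\varepsilon(0)$ is the closed Euclidean ball of radius $\varepsilon$ around $0$ (in the appropriate dimension); $I_0(y)=\{i: y_i=0\}$; $|x|=(|x_1|,\dots,|x_n|)^T$; $\circ$ the componentwise product; $e_i$ the $i$-th unit vector; $g'(x)$ the Jacobian of $g$; $N^{\lim}_X$ the limiting (Mordukhovich) normal cone to $X$; $N_{\ge0}(y)=\{\gamma\in\mathbb{R}^n : \gamma^T(z-y)\le 0\ \forall z\ge 0\}$, i.e. $\gamma_i\le 0$ and $\gamma_iy_i=0$ for all $i$; $y\circ\partial(|x|)=\{y\circ s: s_i=\operatorname{sign}(x_i)\text{ if }x_i\neq0,\ s_i\in[-1,1]\text{ if }x_i=0\}$. *)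

From HB Require Import structures.
From mathcomp Require Import all_boot all_order all_algebra.
From mathcomp Require Import all_classical all_reals all_analysis.
Set Implicit Arguments. Unset Strict Implicit. Unset Printing Implicit Defensive.
Import Order.TTheory GRing.Theory Num.Theory.
Import numFieldNormedType.Exports.
Local Open Scope classical_set_scope.
Local Open Scope ring_scope.

Section Defs.
Variable R : realType.

Definition unitv (n : nat) (i : 'I_n) : 'rV[R]_n := delta_mx 0 i.

Definition dotv (n : nat) (u v : 'rV[R]_n) : R := \sum_(i < n) u 0 i * v 0 i.
Definition enorm (n : nat) (v : 'rV[R]_n) : R := Num.sqrt (dotv v v).

Definition in_ball0 (n : nat) (eps : R) (v : 'rV[R]_n) : Prop := enorm v <= eps.

Definition C1 (n m : nat) (F : 'rV[R]_n -> 'rV[R]_m) : Prop :=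
  (forall x, differentiable F x) /\
  (forall j : 'I_n, continuous (fun x => 'd F x (unitv j))).

Definition C1_scalar (n : nat) (F : 'rV[R]_n -> R) : Prop :=
  (forall x, differentiable F x) /\
  (forall j : 'I_n, continuous (fun x => 'd F x (unitv j))).

Definition grad (n : nat) (F : 'rV[R]_n -> R) (x : 'rV[R]_n) : 'rV[R]_n :=
  \row_j ('d F x (unitv j)).

Definition jacT_mul (n m : nat) (G : 'rV[R]_n -> 'rV[R]_m) (x : 'rV[R]_n)
  (lam : 'rV[R]_m) : 'rV[R]_n :=
  \row_j \sum_(i < m) ('d G x (unitv j)) 0 i * lam 0 i.

Definition frechet_normal (m : nat) (X : set 'rV[R]_m) (xb v : 'rV[R]_m) : Prop :=
  X xb /\
  forall e : R, 0 < e -> exists2 d : R, 0 < d &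
    forall x', X x' -> enorm (x' - xb) <= d -> dotv v (x' - xb) <= e * enorm (x' - xb).

Definition lim_normal (m : nat) (X : set 'rV[R]_m) (xb v : 'rV[R]_m) : Prop :=
  exists (xs vs : nat -> 'rV[R]_m),
    (forall k, X (xs k)) /\ xs @ \oo --> xb /\ vs @ \oo --> v /\
    (forall k, frechet_normal X (xs k) (vs k)).

Definition normal_nonneg (n : nat) (y gam : 'rV[R]_n) : Prop :=
  forall z : 'rV[R]_n, (forall i, 0 <= z 0 i) -> dotv gam (z - y) <= 0.

(* s is a selection of the componentwise subdifferential of |.| at x,
   so that y o s is an element of y o d(|x|) *)
Definition abs_subgrad (n : nat) (x s : 'rV[R]_n) : Prop :=
  forall i, (x 0 i != 0 -> s 0 i = Num.sg (x 0 i)) /\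
            (x 0 i = 0 -> -1 <= s 0 i <= 1).

Definition convex_fun (p : R -> R) : Prop :=
  forall a b t : R, 0 <= t -> t <= 1 ->
    p (t * a + (1 - t) * b) <= t * p a + (1 - t) * p b.

Definition penalty_cond (rho : R) (p : R -> R) : Prop :=
  convex_fun p /\
  (exists s : R, 0 < s /\ (forall t, p s <= p t) /\
     (forall t, (forall u, p t <= p u) -> t = s) /\
     p 0 - p s = rho) /\
  (forall t, derivable p t 1) /\ continuous (derive1 p).

End Defs.

From HB Require Import structures.
From mathcomp Require Import all_boot all_order all_algebra.
From mathcomp Require Import all_classical all_reals all_analysis.
From mathcomp Require Import ring lra.
(* Only the second stationarity block matters.  Where y_i > 0 the multiplier
   gamma_i vanishes, so alpha |x_i| <= eps - p_i'(y_i).  Since alpha |x_i| >= 0,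
   this gives p_i'(y_i) <= eps < p_i'(t* ), hence y_i < t* because the derivative
   of a convex function is nondecreasing; and p_i'(0) <= p_i'(y_i) then gives
   alpha |x_i| <= eps - p_i'(0).  Hence |x_i| y_i <= t* |eps - p_i'(0)| / alpha,
   which tends to 0 as alpha -> +oo. *)

Set Implicit Arguments.
Unset Strict Implicit.
Unset Printing Implicit Defensive.

Import Order.TTheory GRing.Theory Num.Theory.
Import numFieldNormedType.Exports.
Local Open Scope classical_set_scope.
Local Open Scope ring_scope.

Section ConvexDerivative.
Variables (R : realType) (p : R -> R).

Definition slope (a b : R) : R := (p b - p a) / (b - a).

Hypothesis p_convex : convex_fun p.

Lemma convex_le_chord a c b : a < c < b ->
  (b - a) * p c <= (b - c) * p a + (c - a) * p b.
Proof.
move=> /andP[ac cb]; have ba : 0 < b - a by rewrite subr_gt0 (lt_trans ac).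
set t := (b - c) / (b - a).
have t_ge0 : 0 <= t by rewrite divr_ge0 //; lra.
have t_le1 : t <= 1 by rewrite ler_pdivrMr //; lra.
have := p_convex a b t_ge0 t_le1.
have -> : t * a + (1 - t) * b = c by rewrite /t; field; exact: lt0r_neq0.
have -> : (b - c) * p a + (c - a) * p b = (b - a) * (t * p a + (1 - t) * p b).
  by rewrite /t; field; exact: lt0r_neq0.
by rewrite ler_pM2l.
Qed.

Lemma convex_slope_le_left a c b : a < c < b -> slope a c <= slope a b.
Proof.
move=> /[dup] /convex_le_chord chord /andP[ac cb].
have ca : 0 < c - a by rewrite subr_gt0.
have ba : 0 < b - a by rewrite subr_gt0 (lt_trans ac).
rewrite /slope ler_pdivrMr // mulrAC ler_pdivlMr //; nra.
Qed.

Lemma convex_slope_le_right a c b : a < c < b -> slope a b <= slope c b.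
Proof.
move=> /[dup] /convex_le_chord chord /andP[ac cb].
have bc : 0 < b - c by rewrite subr_gt0.
have ba : 0 < b - a by rewrite subr_gt0 (lt_trans ac).
rewrite /slope ler_pdivrMr // mulrAC ler_pdivlMr //; nra.
Qed.

Lemma derivable_cvg_derive1 a : derivable p a 1 ->
  (fun h => h^-1 * (p (h + a) - p a)) @ 0^' --> derive1 p a.
Proof.
move=> pa; rewrite /derive1.
have -> : (fun h => h^-1 * (p (h + a) - p a)) =
    (fun h => h^-1 *: ((p \o shift a) (h *: 1) - p a)).
  by apply/funext => h /=; rewrite [h *: 1]mulr1.
exact: pa.
Qed.

Lemma derive1_le_slope a b : derivable p a 1 -> a < b -> derive1 p a <= slope a b.
Proof.
move=> /derivable_cvg_derive1 pa ab.
have pa_right : (fun h => h^-1 * (p (h + a) - p a)) @ 0^'+ --> derive1 p a.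
  apply: cvg_trans pa; apply: cvg_app => A [e e_gt0 Ae].
  by exists e => // h he h_gt0; apply: Ae => //; exact: lt0r_neq0.
apply: (cvgr_to_le pa_right); near=> h.
have h_gt0 : 0 < h by near: h; exact: nbhs_right_gt.
have hab : h + a < b by rewrite -ltrBrDr; near: h; apply: nbhs_right_lt; rewrite subr_gt0.
have -> : h^-1 * (p (h + a) - p a) = slope a (h + a) by rewrite /slope addrK mulrC.
by apply: convex_slope_le_left; rewrite hab andbT; lra.
Unshelve. all: by end_near.
Qed.

Lemma slope_le_derive1 a b : derivable p b 1 -> a < b -> slope a b <= derive1 p b.
Proof.
move=> /derivable_cvg_derive1 pb ab.
have pb_left : (fun h => h^-1 * (p (h + b) - p b)) @ 0^'- --> derive1 p b.
  apply: cvg_trans pb; apply: cvg_app => A [e e_gt0 Ae].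
  by exists e => // h he h_lt0; apply: Ae => //; exact: ltr0_neq0.
apply: (cvgr_to_ge pb_left); near=> h.
have h_lt0 : h < 0 by near: h; exact: nbhs_left_lt.
have ahb : a < h + b by rewrite -ltrBlDr; near: h; apply: nbhs_left_gt; rewrite subr_lt0.
have -> : h^-1 * (p (h + b) - p b) = slope (h + b) b.
  rewrite /slope; field; rewrite [h + b]addrC opprD addNKr oppr_eq0 andbb; exact: ltr0_neq0.
by apply: convex_slope_le_right; rewrite ahb /=; lra.
Unshelve. all: by end_near.
Qed.

Lemma convex_derive1_nondecreasing : (forall t, derivable p t 1) ->
  {homo derive1 p : a b / a <= b}.
Proof.
move=> p_der a b; rewrite le_eqVlt => /predU1P[-> // | ab].
exact: le_trans (derive1_le_slope (p_der a) ab) (slope_le_derive1 (p_der b) ab).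
Qed.

End ConvexDerivative.

Lemma stationary_penalty_product_le (R : realType) (q : R -> R) (eps ts a u v : R) :
  convex_fun q -> (forall t, derivable q t 1) -> eps < derive1 q ts ->
  0 < a -> 0 <= u -> 0 < v -> `|- derive1 q v - a * u| <= eps ->
  u * v <= ts * `|eps - derive1 q 0| / a.
Proof.
move=> q_convex q_der eps_lt a_gt0 u_ge0 v_gt0 /ler_normlP[stat _].
have q'_homo := convex_derive1_nondecreasing q_convex q_der.
have au_ge0 : 0 <= a * u by rewrite mulr_ge0 // ltW.
have v_lt_ts : v < ts.
  by rewrite ltNge; apply/negP => /q'_homo; lra.
have au_le : a * u <= `|eps - derive1 q 0|.
  apply: le_trans (ler_norm _); have := q'_homo 0 v (ltW v_gt0); lra.
apply: (@le_trans _ _ (u * ts)); first by rewrite ler_wpM2l // ltW.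
rewrite mulrC -mulrA ler_wpM2l ?(ltW (lt_trans v_gt0 v_lt_ts)) //.
by rewrite ler_pdivlMr // mulrC.
Qed.

Lemma normr_entry_le_enorm (R : realType) n (v : 'rV[R]_n) i : `|v 0 i| <= enorm v.
Proof.
have sq_ge0 j : 0 <= v 0 j * v 0 j by rewrite -expr2 sqr_ge0.
rewrite /enorm /dotv -sqrtr_sqr ler_sqrt; last exact: sumr_ge0.
by rewrite (bigD1 i) //= expr2 lerDl sumr_ge0.
Qed.

Lemma mx_norm_le (K : realDomainType) m n (M : 'M[K]_(m, n)) c :
  0 <= c -> (forall i j, `|M i j| <= c) -> `|M| <= c.
Proof.
move=> c_ge0 Mc; rewrite -[`|M|]/(mx_norm M) mx_normrE.
by apply: bigmax_le => // -[i j] _; exact: Mc.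
Qed.

Lemma norm_le_div_cvg0 (R : realType) (V : normedModType R) T (F : set_system T)
    {FF : Filter F} (u : T -> V) (alpha : T -> R) (B : R) :
  0 <= B -> (forall t, `|u t| <= B / alpha t) -> alpha @ F --> +oo -> u @ F --> 0.
Proof.
move=> B_ge0 uB /cvgryPgtr alpha_oo; apply/cvgr0Pnorm_le => e e_gt0.
near=> t; apply: le_trans (uB t) _.
have : B / e < alpha t by near: t; apply: alpha_oo; exact: num_real.
have Be_ge0 : 0 <= B / e by rewrite divr_ge0 // ltW.
move=> /[dup] /(le_lt_trans Be_ge0) alpha_gt0.
by rewrite ler_pdivrMr // ltr_pdivrMr // mulrC => /ltW.
Unshelve. all: by end_near.
Qed.

Lemma complementarity_norm_le (R : realType) n (q : 'I_n -> R -> R) (eps ts a : R)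
    (xv yv gam : 'rV[R]_n) :
  (forall i, convex_fun (q i)) -> (forall i t, derivable (q i) t 1) ->
  0 <= ts -> (forall i, eps < derive1 (q i) ts) -> 0 < a -> (forall i, 0 <= yv 0 i) ->
  in_ball0 eps (\row_i (- derive1 (q i) (yv 0 i) - a * `|xv 0 i|
                        + (if yv 0 i == 0 then gam 0 i else 0))) ->
  `|\row_i (`|xv 0 i| * yv 0 i)| <= ts * (\sum_i `|eps - derive1 (q i) 0|) / a.
Proof.
move=> q_convex q_der ts_ge0 eps_lt a_gt0 yv_ge0 stat.
have bound_ge0 : 0 <= ts * (\sum_i `|eps - derive1 (q i) 0|) / a.
  by rewrite divr_ge0 ?mulr_ge0 ?sumr_ge0 // ltW.
apply: mx_norm_le => // i0 j; rewrite (ord1 i0) mxE ger0_norm ?mulr_ge0 //.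
have [->|yj_neq0] := eqVneq (yv 0 j) 0; first by rewrite mulr0.
have stat_j := le_trans (normr_entry_le_enorm _ j) stat.
rewrite mxE (negbTE yj_neq0) addr0 in stat_j.
apply: le_trans (stationary_penalty_product_le (q_convex j) (q_der j) (eps_lt j)
  a_gt0 (normr_ge0 _) _ stat_j) _; first by rewrite lt_def yj_neq0 yv_ge0.
apply: ler_wpM2r; first by rewrite invr_ge0 ltW.
by apply: ler_wpM2l => //; rewrite (bigD1 j) //= lerDl sumr_ge0.
Qed.

Theorem mainTheorem5 (R : realType) (n m : nat)
  (f : 'rV[R]_n -> R) (g : 'rV[R]_n -> 'rV[R]_m) (X : set 'rV[R]_m)
  (rho : R) (p : 'I_n -> R -> R) (eps : R)
  (alpha : nat -> R) (x y : nat -> 'rV[R]_n) (z : nat -> 'rV[R]_m) :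
  C1_scalar f -> C1 g ->
  X !=set0 -> closed X ->
  0 < rho ->
  (forall i, penalty_cond rho (p i)) ->
  (exists2 ts : R, 0 < ts & forall i, eps < derive1 (p i) ts) ->
  (forall k, 0 < alpha k) ->
  (forall k,
     X (g (x k) + z k) /\ in_ball0 eps (z k) /\ (forall i, 0 <= y k 0 i) /\
     exists (lam : 'rV[R]_m) (gam : 'rV[R]_n) (s : 'rV[R]_n),
       lim_normal X (g (x k) + z k) lam /\
       normal_nonneg (y k) gam /\
       abs_subgrad (x k) s /\
       in_ball0 eps (\row_j (- grad f (x k) 0 j - alpha k * (y k 0 j * s 0 j)
                              - jacT_mul g (x k) lam 0 j)) /\
       in_ball0 eps (\row_i (- derive1 (p i) (y k 0 i) - alpha k * `|x k 0 i|
                              + (if y k 0 i == 0 then gam 0 i else 0)))) ->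
  alpha @ \oo --> +oo ->
  (fun k => \row_i (`|x k 0 i| * y k 0 i)) @ \oo --> (0 : 'rV[R]_n).
Proof.
move=> _ _ _ _ _ p_penalty [ts ts_gt0 eps_lt] alpha_gt0 kkt alpha_oo.
have p_convex i : convex_fun (p i) by case: (p_penalty i).
have p_der i t : derivable (p i) t 1 by case: (p_penalty i) => _ [_ []].
apply: (norm_le_div_cvg0 (B := ts * \sum_i `|eps - derive1 (p i) 0|)) alpha_oo.
  by rewrite mulr_ge0 ?sumr_ge0 // ltW.
move=> k; have [_ [_ [yk_ge0 [lam [gam [s [_ [_ [_ [_ stat]]]]]]]]]] := kkt k.
exact: complementarity_norm_le p_convex p_der (ltW ts_gt0) eps_lt (alpha_gt0 k) yk_ge0 stat.
Qed.
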